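(* Let $(\Omega_i,\Sigma_i,\mathcal{M}_i,\mathcal{F}_i,\mathcal{T}_i)$, $i=1,\dots,n$, be vague membership spaces with $\mathcal{T}_i=\{N_i,\oplus_i,\otimes_i\}$, and let $\Sigma^n=\Sigma_1\times\cdots\times\Sigma_n$. For $A=(A_1,\dots,A_n),B=(B_1,\dots,B_n)\in\Sigma^n$ define $A\equiv B$ iff $\mathcal{M}_i(A_i)=\mathcal{M}_i(B_i)$ for all $i=1,\dots,n$. Then $\equiv$ is an equivalence relation on $\Sigma^n$, and on the set $\overline{\Sigma^n}$ of equivalence classes the relation $[A]\precsim[B]$ iff $\mathcal{M}_i(A_i)\le\mathcal{M}_i(B_i)$ for all $i$ is a well-defined partial order. If moreover every $\oplus_i$ is the maximum t-conorm ($x\oplus_i y=\max\{x,y\}$), then $(\overline{\Sigma^n};\precsim)$ is a complete lattice.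
   Context: A t-norm is a commutative, associative binary operation $\otimes$ on $[0,1]$ that is nondecreasing in each argument and satisfies $x\otimes 1=x$; a t-conorm $\oplus$ satisfies the same conditions except that $x\oplus 0=x$. A strong negation is a continuous, strictly decreasing map $N:[0,1]\to[0,1]$ with $N(0)=1$, $N(1)=0$ and $N(N(x))=x$. For a sequence $(a_n)$ in $[0,1]$, $\bigoplus_{n=1}^\infty a_n:=\lim_{m\to\infty}(a_1\oplus\cdots\oplus a_m)$ and $\bigotimes_{n=1}^\infty a_n:=\lim_{m\to\infty}(a_1\otimes\cdots\otimes a_m)$ (monotone limits); for an arbitrary family $(a_i)_{i\in I}$, $\bigoplus_{i\in I}a_i:=\sup\{\bigoplus_{i\in J}a_i: J\subseteq I \text{ finite}\}$, the empty $\oplus$ being $0$. A vague membership space $(\Omega,\Sigma,\mathcal{M},\mathcal{F},\mathcal{T})$ consists of: a nonempty set $\Omega$ (elementary vague attributes); two symbols $\bot,\top\notin\Omega$; the set $\Sigma$ of formal terms generated from $\Omega\cup\{\bot,\top\}$ by a unary operation $\neg$, binary operations $\veebar,\barwedge$ and countable operations $\veebar_{n=1}^\infty,\barwedge_{n=1}^\infty$ (here $\mathcal{F}=\{\bot,\top,\neg,\barwedge,\veebar\}$), where a finite join $A_1\veebar\cdots\veebar A_n$ is identified with the countable join of the sequence $A_1,\dots,A_n,\bot,\bot,\dots$ and a finite meet $A_1\barwedge\cdots\barwedge A_n$ with the countable meet of $A_1,\dots,A_n,\top,\top,\dots$; a triple $\mathcal{T}=\{N,\oplus,\otimes\}$ of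 a strong negation $N$, a t-norm $\otimes$ and a t-conorm $\oplus$ that are $N$-dual, i.e. $x\oplus y=N(N(x)\otimes N(y))$; and a map $\mathcal{M}:\Sigma\to[0,1]$ satisfying (I) there is $p\in\Omega$ with $\mathcal{M}(p)>0$, and if $\mathcal{M}(p_0)=1$ for some $p_0\in\Omega$ then $\mathcal{M}(p)=0$ for all $p\in\Omega\setminus\{p_0\}$; (II) $\mathcal{M}(\bot)=0$, $\mathcal{M}(\top)=1$; (III) $\mathcal{M}(\neg A)\le N(\mathcal{M}(A))$ for all $A\in\Sigma$; (IV) for every sequence $A_1,A_2,\dots\in\Sigma$, $\mathcal{M}(\veebar_{n=1}^\infty A_n)=\bigoplus_{n=1}^\infty\mathcal{M}(A_n)$ and $\mathcal{M}(\barwedge_{n=1}^\infty A_n)=\bigotimes_{n=1}^\infty\mathcal{M}(A_n)$; (V) for every $p\in\Omega$, $\mathcal{M}(\neg p)\ge\bigoplus_{q\in\Omega\setminus\{p\}}\mathcal{M}(q)$. The space is called regular if $\mathcal{M}(\neg A)=N(\mathcal{M}(A))$ for all $A\in\Sigma$. The product vague membership space of $n$ such spaces has attribute set $\Sigma^n=\Sigma_1\times\cdots\times\Sigma_n$, operations defined componentwise, and membership measure $\mathcal{M}^n(A_1,\dots,A_n)=(\mathcal{M}_1(A_1),\dots,\mathcal{M}_n(A_n))\in[0,1]^n$, with $[0,1]^n$ ordered componentwise. *)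

From Stdlib Require Import Reals Lra List Classical.
From Stdlib Require Vectors.Fin.
Open Scope R_scope.
Set Implicit Arguments.

Definition unit_I (x : R) : Prop := 0 <= x <= 1.

Record is_tnorm (T : R -> R -> R) : Prop := {
  tn_range : forall x y, unit_I x -> unit_I y -> unit_I (T x y);
  tn_comm : forall x y, unit_I x -> unit_I y -> T x y = T y x;
  tn_assoc : forall x y z, unit_I x -> unit_I y -> unit_I z ->
                T x (T y z) = T (T x y) z;
  tn_mono : forall x x' y y', unit_I x -> unit_I x' -> unit_I y -> unit_I y' ->
                x <= x' -> y <= y' -> T x y <= T x' y';
  tn_unit : forall x, unit_I x -> T x 1 = x }.

Record is_tconorm (S : R -> R -> R) : Prop := {
  tc_range : forall x y, unit_I x -> unit_I y -> unit_I (S x y);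
  tc_comm : forall x y, unit_I x -> unit_I y -> S x y = S y x;
  tc_assoc : forall x y z, unit_I x -> unit_I y -> unit_I z ->
                S x (S y z) = S (S x y) z;
  tc_mono : forall x x' y y', unit_I x -> unit_I x' -> unit_I y -> unit_I y' ->
                x <= x' -> y <= y' -> S x y <= S x' y';
  tc_unit : forall x, unit_I x -> S x 0 = x }.

Record is_strong_negation (N : R -> R) : Prop := {
  sn_range : forall x, unit_I x -> unit_I (N x);
  sn_cont : forall x, unit_I x -> forall eps, 0 < eps -> exists delta, 0 < delta /\
              forall y, unit_I y -> Rabs (y - x) < delta -> Rabs (N y - N x) < eps;
  sn_strict : forall x y, unit_I x -> unit_I y -> x < y -> N y < N x;
  sn_0 : N 0 = 1;
  sn_1 : N 1 = 0;
  sn_invol : forall x, unit_I x -> N (N x) = x }.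

(** * Formal terms over Omega.  Only the countable join/meet are primitive;
    finite joins/meets are the padded countable ones (as in the paper). *)
Inductive term (Omega : Type) : Type :=
| tAtom : Omega -> term Omega
| tBot : term Omega
| tTop : term Omega
| tNeg : term Omega -> term Omega
| tJoin : (nat -> term Omega) -> term Omega
| tMeet : (nat -> term Omega) -> term Omega.
Arguments tBot {Omega}.
Arguments tTop {Omega}.

Definition pad (Omega : Type) (d : term Omega) (l : list (term Omega)) : nat -> term Omega :=
  fun k => nth k l d.
Definition tJoinFin (Omega : Type) (l : list (term Omega)) : term Omega := tJoin (pad tBot l).
Definition tMeetFin (Omega : Type) (l : list (term Omega)) : term Omega := tMeet (pad tTop l).

Fixpoint pfold (op : R -> R -> R) (e : R) (a : nat -> R) (m : nat) : R :=
  match m with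
  | O => e
  | S m' => op (pfold op e a m') (a m')
  end.

Definition big_countable (op : R -> R -> R) (e : R) (a : nat -> R) (l : R) : Prop :=
  Un_cv (fun m => pfold op e a (S m)) l.

(** arbitrary-family t-conorm sum over Omega \ {p}: sup over finite subsets *)
Definition finite_sums_off (Omega : Type) (oplus : R -> R -> R) (f : Omega -> R) (p : Omega)
  : R -> Prop :=
  fun x => exists l : list Omega, NoDup l /\ ~ In p l /\
             x = fold_right oplus 0 (map f l).

Record VMS (Omega : Type) : Type := {
  vN : R -> R;
  voplus : R -> R -> R;
  votimes : R -> R -> R;
  vM : term Omega -> R;
  vN_neg : is_strong_negation vN;
  voplus_tc : is_tconorm voplus;
  votimes_tn : is_tnorm votimes;
  vdual : forall x y, unit_I x -> unit_I y -> voplus x y = vN (votimes (vN x) (vN y));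
  vM_range : forall A, unit_I (vM A);
  vI_pos : exists p, vM (tAtom p) > 0;
  vI_one : forall p0, vM (tAtom p0) = 1 -> forall p, p <> p0 -> vM (tAtom p) = 0;
  vII_bot : vM tBot = 0;
  vII_top : vM tTop = 1;
  vIII : forall A, vM (tNeg A) <= vN (vM A);
  vIV_join : forall A : nat -> term Omega,
      big_countable voplus 0 (fun k => vM (A k)) (vM (tJoin A));
  vIV_meet : forall A : nat -> term Omega,
      big_countable votimes 1 (fun k => vM (A k)) (vM (tMeet A));
  vV : forall p, exists s,
      is_lub (finite_sums_off voplus (fun q => vM (tAtom q)) p) s /\ s <= vM (tNeg (tAtom p))
}.

Definition prodTerm (n : nat) (Om : Fin.t n -> Type) : Type := forall i, term (Om i).

Definition prodM (n : nat) (Om : Fin.t n -> Type) (sp : forall i, VMS (Om i))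
  (A : prodTerm Om) : Fin.t n -> R := fun i => vM (sp i) (A i).

Definition pequiv (n : nat) (Om : Fin.t n -> Type) (sp : forall i, VMS (Om i))
  (A B : prodTerm Om) : Prop := forall i, vM (sp i) (A i) = vM (sp i) (B i).

Definition ple (n : nat) (Om : Fin.t n -> Type) (sp : forall i, VMS (Om i))
  (A B : prodTerm Om) : Prop := forall i, vM (sp i) (A i) <= vM (sp i) (B i).

Definition is_class (n : nat) (Om : Fin.t n -> Type) (sp : forall i, VMS (Om i))
  (C : prodTerm Om -> Prop) : Prop :=
  exists A, forall B, C B <-> pequiv sp A B.

Definition classes (n : nat) (Om : Fin.t n -> Type) (sp : forall i, VMS (Om i)) : Type :=
  { C : prodTerm Om -> Prop | is_class sp C }.
Arguments classes {n Om} sp.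

Definition cle (n : nat) (Om : Fin.t n -> Type) (sp : forall i, VMS (Om i))
  (C D : classes sp) : Prop :=
  exists A B, proj1_sig C A /\ proj1_sig D B /\ ple sp A B.

Definition is_equivalence (T : Type) (r : T -> T -> Prop) : Prop :=
  (forall x, r x x) /\ (forall x y, r x y -> r y x) /\
  (forall x y z, r x y -> r y z -> r x z).

Definition is_partial_order (T : Type) (r : T -> T -> Prop) : Prop :=
  (forall x, r x x) /\ (forall x y, r x y -> r y x -> x = y) /\
  (forall x y z, r x y -> r y z -> r x z).

Definition is_complete_lattice (T : Type) (r : T -> T -> Prop) : Prop :=
  is_partial_order r /\
  (forall S : T -> Prop, exists s, (forall x, S x -> r x s) /\
        (forall u, (forall x, S x -> r x u) -> r s u)) /\
  (forall S : T -> Prop, exists s, (forall x, S x -> r s x) /\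
        (forall u, (forall x, S x -> r u x) -> r u s)).

Arguments pequiv {n Om} sp A B.
Arguments ple {n Om} sp A B.
Arguments cle {n Om} sp C D.
Arguments is_class {n Om} sp C.

(* Equivalence and the partial order are inherited from equality and the
   componentwise order of the membership vectors.  For completeness it is
   enough to produce suprema.  When [oplus] is the maximum, the countable join
   of a sequence of terms is measured by the supremum of its memberships; so
   choosing terms whose memberships approach the supremum [s] of a set of
   attained memberships (by [s - 1/(k+1)]) gives a term with membership exactly
   [s].  Doing this in every coordinate yields the least upper bound of any
   family of classes, and infima are suprema of lower bounds. *)

From Stdlib Require Import Reals.
From Stdlib Require Vectors.Fin.
From Stdlib Require Import Lra Lia Classical IndefiniteDescription
  FunctionalExtensionality PropExtensionality ProofIrrelevance.
Open Scope R_scope.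

Lemma lub_approx (E : R -> Prop) (s : R) :
  is_lub E s -> forall k : nat, exists v, E v /\ s - / (INR k + 1) < v.
Proof.
  intros [_ Hleast] k.
  assert (Hpos : 0 < / (INR k + 1)).
  { apply Rinv_0_lt_compat. pose proof (pos_INR k). lra. }
  apply NNPP; intro Hnone.
  enough (s <= s - / (INR k + 1)) by lra.
  apply Hleast; intros v Hv.
  apply Rnot_lt_le; intro Hlt.
  apply Hnone; exists v; split; auto.
Qed.

Lemma Un_cv_inv_squeeze (u : nat -> R) (s : R) :
  (forall m, s - / (INR m + 1) < u m <= s) -> Un_cv u s.
Proof.
  intros Hu eps Heps.
  destruct (archimed_cor1 eps Heps) as [N [HN HN0]].
  exists N; intros m Hm; unfold R_dist.
  assert (Hinv : / (INR m + 1) <= / INR N).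
  { apply Rinv_le_contravar; [apply lt_0_INR; lia|].
    apply le_INR in Hm; lra. }
  specialize (Hu m).
  rewrite Rabs_left1; lra.
Qed.

Section MaxConorm.

Variables (O : Type) (V : VMS O).
Hypothesis oplus_max : forall x y, unit_I x -> unit_I y -> voplus V x y = Rmax x y.

Lemma pfold_max_bounded (a : nat -> R) (s : R) :
  0 <= s -> (forall k, unit_I (a k)) -> (forall k, a k <= s) ->
  forall m, unit_I (pfold (voplus V) 0 a m) /\ pfold (voplus V) 0 a m <= s.
Proof.
  intros Hs Ha Has m; induction m as [|m [IHu IHs]]; simpl.
  - unfold unit_I; lra.
  - specialize (Ha m); specialize (Has m).
    rewrite oplus_max by auto.
    unfold unit_I in *; unfold Rmax; destruct (Rle_dec _ _); lra.
Qed.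

Lemma vM_join_approx (f : nat -> term O) (s : R) :
  0 <= s -> (forall k, vM V (f k) <= s) ->
  (forall k, s - / (INR k + 1) < vM V (f k)) -> vM V (tJoin f) = s.
Proof.
  intros Hs Hle Hgt.
  apply (UL_sequence _ _ _ (vIV_join V f)), Un_cv_inv_squeeze; intro m.
  set (a := fun k => vM V (f k)).
  assert (Ha : forall k, unit_I (a k)) by (intro k; apply vM_range).
  destruct (pfold_max_bounded a s Hs Ha Hle m) as [Hu _].
  destruct (pfold_max_bounded a s Hs Ha Hle (S m)) as [_ HS]; simpl in *.
  rewrite oplus_max in * by auto.
  pose proof (Rmax_r (pfold (voplus V) 0 a m) (a m)).
  assert (Hgt_m : s - / (INR m + 1) < a m) by apply Hgt.
  lra.
Qed.

Lemma attained_lub (E : R -> Prop) :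
  (forall v, E v -> exists t, vM V t = v) -> E 0 -> exists t, is_lub E (vM V t).
Proof.
  intros Hatt H0.
  assert (Hbound : bound E).
  { exists 1; intros v Hv; destruct (Hatt v Hv) as [t <-]; apply vM_range. }
  destruct (completeness E Hbound (ex_intro _ 0 H0)) as [s Hs].
  assert (Happrox : forall k, exists t, E (vM V t) /\ s - / (INR k + 1) < vM V t).
  { intro k; destruct (lub_approx E s Hs k) as [v [Ev Hv]].
    destruct (Hatt v Ev) as [t <-]; eauto. }
  destruct (functional_choice _ Happrox) as [f Hf].
  exists (tJoin f).
  rewrite (vM_join_approx f s); [exact Hs | apply (proj1 Hs), H0 | |].
  - intro k; apply (proj1 Hs), Hf.
  - intro k; apply Hf.
Qed.

End MaxConorm.

Lemma complete_of_lubs (T : Type) (r : T -> T -> Prop) :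
  (forall S : T -> Prop, exists s, (forall x, S x -> r x s) /\
        (forall u, (forall x, S x -> r x u) -> r s u)) ->
  forall S : T -> Prop, exists s, (forall x, S x -> r s x) /\
        (forall u, (forall x, S x -> r u x) -> r u s).
Proof.
  intros Hlub S.
  destruct (Hlub (fun y => forall x, S x -> r y x)) as [s [Hup Hleast]].
  exists s; split.
  - intros x Sx; apply Hleast; auto.
  - intros u Hu; apply Hup, Hu.
Qed.

Section Classes.

Context {n : nat} {Om : Fin.t n -> Type} (sp : forall i, VMS (Om i)).

Lemma pequiv_equivalence : is_equivalence (pequiv sp).
Proof.
  unfold pequiv; split; [|split]; intros; [reflexivity | auto | congruence].
Qed.

Lemma ple_pequiv_compat A A' B B' :
  pequiv sp A A' -> pequiv sp B B' -> (ple sp A B <-> ple sp A' B').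
Proof.
  intros HA HB; unfold ple; split; intros H i;
    specialize (H i); specialize (HA i); specialize (HB i); lra.
Qed.

Definition class_of (A : prodTerm Om) : classes sp :=
  exist _ (pequiv sp A) (ex_intro _ A (fun B => iff_refl _)).

Lemma class_of_mem A : proj1_sig (class_of A) A.
Proof. intro i; reflexivity. Qed.

Lemma class_rep (C : classes sp) : exists A, proj1_sig C A.
Proof. destruct C as [C [A HA]]; exists A; apply HA; intro; reflexivity. Qed.

Lemma class_mem_pequiv (C : classes sp) A B :
  proj1_sig C A -> (proj1_sig C B <-> pequiv sp A B).
Proof.
  destruct C as [C [A0 HA]]; simpl; intro CA.
  rewrite HA; apply HA in CA.
  split; intros H i; specialize (CA i); specialize (H i); congruence.
Qed.

Lemma class_ext (C D : classes sp) :
  (forall B, proj1_sig C B <-> proj1_sig D B) -> C = D.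
Proof.
  destruct C as [C HC], D as [D HD]; simpl; intro H.
  assert (HCD : C = D).
  { apply functional_extensionality; intro; apply propositional_extensionality; auto. }
  subst D; f_equal; apply proof_irrelevance.
Qed.

Lemma cle_reps {C D : classes sp} {A B} :
  cle sp C D -> proj1_sig C A -> proj1_sig D B -> ple sp A B.
Proof.
  intros [A0 [B0 [CA0 [DB0 HAB]]]] CA DB.
  apply (ple_pequiv_compat A0 A B0 B); auto.
  - exact (proj1 (class_mem_pequiv C A0 A CA0) CA).
  - exact (proj1 (class_mem_pequiv D B0 B DB0) DB).
Qed.

Lemma cle_partial_order : is_partial_order (cle sp).
Proof.
  split; [|split].
  - intro C; destruct (class_rep C) as [A CA].
    exists A, A; repeat split; auto; intro; lra.
  - intros C D HCD HDC.
    destruct (class_rep C) as [A CA], (class_rep D) as [B DB].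
    pose proof (cle_reps HCD CA DB) as HAB; pose proof (cle_reps HDC DB CA) as HBA.
    assert (HeqAB : pequiv sp A B) by (intro i; apply Rle_antisym; auto).
    apply class_ext; intro X.
    rewrite (class_mem_pequiv C A X CA), (class_mem_pequiv D B X DB).
    split; intros H i; specialize (H i); specialize (HeqAB i); congruence.
  - intros C D E HCD HDE.
    destruct (class_rep C) as [A CA], (class_rep D) as [B DB], (class_rep E) as [G EG].
    pose proof (cle_reps HCD CA DB) as HAB; pose proof (cle_reps HDE DB EG) as HBG.
    exists A, G; repeat split; auto.
    intro i; eapply Rle_trans; [apply HAB | apply HBG].
Qed.

Lemma cle_lubs :
  (forall i x y, unit_I x -> unit_I y -> voplus (sp i) x y = Rmax x y) ->
  forall S : classes sp -> Prop, exists s, (forall x, S x -> cle sp x s) /\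
        (forall u, (forall x, S x -> cle sp x u) -> cle sp s u).
Proof.
  intros Hmax S.
  (* [0 = vM tBot] keeps [E i] nonempty when [S] is empty. *)
  set (E := fun i v => v = 0 \/
          exists x A, S x /\ proj1_sig x A /\ v = vM (sp i) (A i)).
  assert (Hlub : forall i, exists t, is_lub (E i) (vM (sp i) t)).
  { intro i; apply attained_lub; [apply Hmax | | left; reflexivity].
    intros v [-> | [x [A [_ [_ ->]]]]]; [exists tBot; apply vII_bot | eauto]. }
  set (J := fun i => proj1_sig (constructive_indefinite_description _ (Hlub i))).
  assert (HJ : forall i, is_lub (E i) (vM (sp i) (J i)))
    by (intro i; exact (proj2_sig (constructive_indefinite_description _ (Hlub i)))).
  exists (class_of J); split.
  - intros x Sx; destruct (class_rep x) as [A xA].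
    exists A, J; split; [exact xA | split; [apply class_of_mem |]].
    intro i; apply (proj1 (HJ i)); right; eauto.
  - intros u Hu; destruct (class_rep u) as [U uU].
    exists J, U; split; [apply class_of_mem | split; [exact uU |]].
    intro i; apply (proj2 (HJ i)).
    intros v [-> | [x [A [Sx [xA ->]]]]].
    + apply vM_range.
    + exact (cle_reps (Hu x Sx) xA uU i).
Qed.

End Classes.

Theorem proposition6p1 (n : nat) (Om : Fin.t n -> Type) (sp : forall i, VMS (Om i)) :
  is_equivalence (pequiv sp) /\
  (forall A A' B B', pequiv sp A A' -> pequiv sp B B' ->
      (ple sp A B <-> ple sp A' B')) /\
  is_partial_order (cle sp) /\
  ((forall i x y, unit_I x -> unit_I y -> voplus (sp i) x y = Rmax x y) ->
     is_complete_lattice (cle sp)).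
Proof.
  split; [apply pequiv_equivalence|].
  split; [apply ple_pequiv_compat|].
  split; [apply cle_partial_order|].
  intro Hmax; split; [apply cle_partial_order|].
  split; [apply cle_lubs, Hmax | apply complete_of_lubs, cle_lubs, Hmax].
Qed.
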